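(* Let $\mathcal{X}$ be a finite nonempty set of types, $n=(n_x)_{x\in\mathcal{X}}$ nonnegative integers, and $\Phi=(\Phi_{xy})_{x,y\in\mathcal{X}}$ a real matrix with $\Phi_{xy}=\Phi_{yx}$ for all $x,y$. Then: (i) a stable roommate matching exists if and only if $\mathcal{W}_{\mathcal{P}}(n,\Phi)=\mathcal{W}_{\mathcal{B}}(n,n,\Phi/2)$; (ii) every stable roommate matching $\mu$ achieves the maximal aggregate surplus, i.e. $S_R(\mu;\Phi)=\mathcal{W}_{\mathcal{P}}(n,\Phi)$; (iii) whenever $(\mu,u)$ is a stable outcome, the payoff vector $u$ (together with some antisymmetric matrix $A$) is an optimal solution of the program $$\min_{u\in\mathbb{R}^{\mathcal{X}},\,A\in\mathbb{R}^{\mathcal{X}\times\mathcal{X}}}\ \sum_x u_x n_x\quad\text{s.t. } u_x\ge 0,\ \ u_x+u_y\ge \Phi_{xy}+A_{xy},\ \ A_{xy}=-A_{yx}\ \text{ for all } x,y\in\mathcal{X}.$$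
   Context: Roommate matching with transferable utility: $n_x$ is the number of individuals of type $x$; a pair of types $\{x,y\}$ (possibly $x=y$) generates joint surplus $\Phi_{xy}$; singles get utility $0$. Feasible roommate matchings: $\mathcal{P}(n)=\{\mu=(\mu_{xy})_{x,y\in\mathcal{X}}:\ \mu_{xy}\in\mathbb{N},\ \mu_{xy}=\mu_{yx},\ 2\mu_{xx}+\sum_{y\neq x}\mu_{xy}\le n_x\ \forall x\}$. Total surplus $S_R(\mu;\Phi)=\sum_x\mu_{xx}\Phi_{xx}+\sum_{x\neq y}\mu_{xy}\Phi_{xy}/2$, and $\mathcal{W}_{\mathcal{P}}(n,\Phi)=\max_{\mu\in\mathcal{P}(n)}S_R(\mu;\Phi)$. Bipartite problem: $\mathcal{B}(n,n)=\{\nu\in\mathbb{N}^{\mathcal{X}\times\mathcal{X}}:\ \sum_y\nu_{xy}\le n_x\ \forall x,\ \sum_x\nu_{xy}\le n_y\ \forall y\}$ and $\mathcal{W}_{\mathcal{B}}(n,n,\Phi/2)=\max_{\nu\in\mathcal{B}(n,n)}\sum_{x,y}\nu_{xy}\Phi_{xy}/2$. An outcome is a pair $(\mu,u)$ with $\mu\in\mathcal{P}(n)$ and $u=(u_x)\in\mathbb{R}^{\mathcal{X}}$ (payoff of each type-$x$ individual) such that $\sum_x n_xu_x=S_R(\mu;\Phi)$. It is stable if $u_x\ge0$ and $u_x+u_y\ge\Phi_{xy}$ for all $x,y\in\mathcal{X}$. A matching $\mu\in\mathcal{P}(n)$ is a stable roommate matching if there is $u$ with $(\mu,u)$ a stable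 outcome. *)

From HB Require Import structures.
From mathcomp Require Import all_boot all_order all_algebra.
Set Implicit Arguments. Unset Strict Implicit. Unset Printing Implicit Defensive.
Import Order.TTheory GRing.Theory Num.Theory.
Local Open Scope ring_scope.

Section Roommate.
Variables (R : realFieldType) (X : finType).

Definition roommate_feasible (n : X -> nat) (mu : X -> X -> nat) : bool :=
  [forall x, forall y, mu x y == mu y x] &&
  [forall x, (2 * mu x x + \sum_(y | y != x) mu x y <= n x)%N].

Definition S_R (Phi : X -> X -> R) (mu : X -> X -> nat) : R :=
  \sum_x (mu x x)%:R * Phi x x +
  \sum_x \sum_(y | y != x) (mu x y)%:R * Phi x y / 2.

Definition bipartite_feasible (n : X -> nat) (nu : X -> X -> nat) : bool :=
  [forall x, (\sum_y nu x y <= n x)%N] &&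
  [forall y, (\sum_x nu x y <= n y)%N].

Definition S_B (Phi : X -> X -> R) (nu : X -> X -> nat) : R :=
  \sum_x \sum_y (nu x y)%:R * (Phi x y / 2).

(* any feasible matching has entries <= sum_x n_x, so the following
   finite enumeration covers all of P(n) (resp. B(n,n)); the zero matching
   is feasible with value 0, so 0 is a harmless neutral element for max. *)
Definition nbound (n : X -> nat) : nat := (\sum_x n x)%N.

Definition W_P (n : X -> nat) (Phi : X -> X -> R) : R :=
  \big[Num.max/0]_(m : {ffun X * X -> 'I_(nbound n).+1}
     | roommate_feasible n (fun x y => nat_of_ord (m (x, y))))
     S_R Phi (fun x y => nat_of_ord (m (x, y))).

Definition W_B (n : X -> nat) (Phi : X -> X -> R) : R :=
  \big[Num.max/0]_(m : {ffun X * X -> 'I_(nbound n).+1}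
     | bipartite_feasible n (fun x y => nat_of_ord (m (x, y))))
     S_B Phi (fun x y => nat_of_ord (m (x, y))).

Definition outcome (n : X -> nat) (Phi : X -> X -> R)
    (mu : X -> X -> nat) (u : X -> R) : Prop :=
  roommate_feasible n mu /\ \sum_x (n x)%:R * u x = S_R Phi mu.

Definition stable_outcome (n : X -> nat) (Phi : X -> X -> R)
    (mu : X -> X -> nat) (u : X -> R) : Prop :=
  outcome n Phi mu u /\ (forall x, 0 <= u x) /\
  (forall x y, Phi x y <= u x + u y).

Definition stable_roommate_matching (n : X -> nat) (Phi : X -> X -> R)
    (mu : X -> X -> nat) : Prop :=
  roommate_feasible n mu /\ exists u, stable_outcome n Phi mu u.

Definition dual_feasible (Phi : X -> X -> R) (u : X -> R) (A : X -> X -> R)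
    : Prop :=
  (forall x, 0 <= u x) /\
  (forall x y, Phi x y + A x y <= u x + u y) /\
  (forall x y, A x y = - A y x).

Definition dual_optimal (n : X -> nat) (Phi : X -> X -> R)
    (u : X -> R) (A : X -> X -> R) : Prop :=
  dual_feasible Phi u A /\
  forall u' A', dual_feasible Phi u' A' ->
    \sum_x u x * (n x)%:R <= \sum_x u' x * (n x)%:R.

End Roommate.

(* Splitting every type x into n_x individuals turns the bipartite problem into
   an assignment problem.  An optimal permutation s leaves no negative cycle in
   the reduced costs C i (s i) - C i (s k), so shortest-walk potentials exist and
   yield prices a, b with C i j <= a i + b j and sum (a + b) = value of s.  For
   C i j = max(Phi, 0) / 2 and symmetric Phi, e := a + b satisfies
   e i + e j >= Phi, so u x := min of e over the individuals of type x is a dual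
   solution of value at most W_B.  Conversely, a roommate matching with doubled
   diagonal is a symmetric bipartite matching of the same surplus, against which
   an antisymmetric A sums to zero: this gives weak duality S_R mu <= sum u n for
   every dual feasible (u, A).  Hence a stable outcome forces
   S_R mu = W_P = W_B = sum u n, and when W_P = W_B a maximiser of W_P is stable
   with the dual u above. *)

From HB Require Import structures.
From mathcomp Require Import all_boot all_order all_algebra all_fingroup.
From mathcomp Require Import zify ring lra.
From Stdlib Require Import FunctionalExtensionality.
Import Order.TTheory GRing.Theory Num.Theory.
Local Open Scope ring_scope.

Set Implicit Arguments. Unset Strict Implicit. Unset Printing Implicit Defensive.

Section EncodedMax.
Variables (R : realFieldType) (X : finType) (N : nat).
Variables (feasible : (X -> X -> nat) -> bool) (V : (X -> X -> nat) -> R).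

Definition decode (m : {ffun X * X -> 'I_N.+1}) (x y : X) : nat := m (x, y).

Definition encode (mu : X -> X -> nat) : {ffun X * X -> 'I_N.+1} :=
  [ffun p => inord (mu p.1 p.2)].

Definition encoded_max : R :=
  \big[Num.max/0]_(m | feasible (decode m)) V (decode m).

Lemma encodeK mu : (forall x y, (mu x y <= N)%N) -> decode (encode mu) = mu.
Proof.
move=> mu_le; do 2!apply: functional_extensionality => ?.
by rewrite /decode ffunE inordK // ltnS.
Qed.

Lemma le_encoded_max mu :
  (forall x y, (mu x y <= N)%N) -> feasible mu -> V mu <= encoded_max.
Proof.
move=> mu_le feas_mu; rewrite -(encodeK mu_le) in feas_mu *.
exact: le_bigmax_cond.
Qed.

Lemma encoded_max_le b :
  0 <= b -> (forall mu, feasible mu -> V mu <= b) -> encoded_max <= b.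
Proof. by move=> b_ge0 Vb; apply: bigmax_le => // m /Vb. Qed.

Lemma encoded_max_attained mu0 :
    (forall x y, (mu0 x y <= N)%N) -> feasible mu0 -> 0 <= V mu0 ->
  exists2 mu, feasible mu & encoded_max = V mu.
Proof.
move=> mu0_le feas0 V0; rewrite -(encodeK mu0_le) in feas0 V0.
case: (@arg_maxP _ _ _ (encode mu0) (fun m => feasible (decode m))
  (fun m => V (decode m)) feas0) => m feas_m m_max.
exists (decode m) => //; apply/le_anti; rewrite le_bigmax_cond // andbT.
by apply: bigmax_le => [|m' /m_max //]; apply: le_trans V0 (m_max _ feas0).
Qed.

End EncodedMax.

Section Potential.
Variables (R : realFieldType) (T : finType) (d : T -> T -> R).

Definition walk_cost (x : T) (s : seq T) : R := \sum_(c <- pairmap d x s) c.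

Lemma walk_cost_cons x y s : walk_cost x (y :: s) = d x y + walk_cost y s.
Proof. by rewrite /walk_cost /= big_cons. Qed.

Lemma walk_cost_cat x s1 s2 :
  walk_cost x (s1 ++ s2) = walk_cost x s1 + walk_cost (last x s1) s2.
Proof. by rewrite /walk_cost pairmap_cat big_cat. Qed.

Lemma walk_cost_fpath f x s :
  fpath f x s -> walk_cost x s = \sum_(y <- belast x s) d y (f y).
Proof.
elim: s x => [|y s IHs] x /=; first by rewrite /walk_cost !big_nil.
by case/andP=> /eqP <- fs; rewrite walk_cost_cons IHs // big_cons.
Qed.

Hypothesis d_diag : forall i, d i i = 0.
Hypothesis perm_cost_ge0 : forall t : {perm T}, 0 <= \sum_i d i (t i).

(* A simple cycle is the nontrivial part of the permutation [next c]. *)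
Lemma cycle_cost_ge0 v l : uniq (v :: l) -> 0 <= walk_cost v (rcons l v).
Proof.
move=> Uc; pose t := perm (can_inj (prev_next Uc)).
rewrite (walk_cost_fpath (cycle_next Uc)) belast_rcons.
suff -> : \sum_(y <- v :: l) d y (next (v :: l) y) = \sum_i d i (t i) by [].
rewrite [RHS](bigID (mem (v :: l))) /= [X in _ + X]big1 ?addr0.
  by rewrite big_uniq //; apply: eq_bigr => i _; rewrite permE.
by move=> i /negbTE i_out; rewrite permE next_nth i_out d_diag.
Qed.

(* Least cost of a simple walk from [i]: such walks have fewer than [#|T|]
   steps, and the default [0] is the cost of the empty walk. *)
Definition potential (i : T) : R :=
  \big[Num.min/0]_(k < #|T|)
     \big[Num.min/0]_(s : k.-tuple T | uniq (i :: s)) walk_cost i s.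

Lemma potential_le i s : uniq (i :: s) -> potential i <= walk_cost i s.
Proof.
move=> Us; have size_s : (size s < #|T|)%N.
  by rewrite -ltnS -[(size s).+1]/(size (i :: s)) -(card_uniqP Us) ltnS max_card.
apply: le_trans (bigmin_le 0 (Ordinal size_s) _) _.
exact: (@bigmin_le_cond _ _ _ _ (in_tuple s)).
Qed.

Lemma potential_le_step i k s :
  uniq (k :: s) -> potential i <= d i k + walk_cost k s.
Proof.
move=> Uks; have [i_in|i_out] := boolP (i \in k :: s); last first.
  by rewrite -walk_cost_cons potential_le //= i_out.
rewrite inE in i_in; case/predU1P: i_in Uks => [->|/splitPr[p1 s2]] Uks.
  by rewrite d_diag add0r potential_le.
rewrite -cat_rcons walk_cost_cat last_rcons addrA.
have Us2 : uniq (i :: s2).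
  by move: Uks; rewrite -cat_cons cat_uniq => /and3P[].
have Ucycle : uniq (i :: k :: p1).
  by move: Uks; rewrite -cat_cons -cat_rcons cat_uniq rcons_uniq => /andP[].
have := cycle_cost_ge0 Ucycle; rewrite rcons_cons walk_cost_cons.
have := potential_le Us2; lra.
Qed.

Lemma potential_triangle i k : potential i <= d i k + potential k.
Proof.
rewrite -lerBlDl; have base := potential_le_step i (s := [::]) (k := k) isT.
rewrite /walk_cost big_nil addr0 in base.
apply: le_bigmin => [|j _]; first by rewrite subr_le0.
apply: le_bigmin => [|s Us]; first by rewrite subr_le0.
by rewrite lerBlDl potential_le_step.
Qed.

End Potential.

Lemma assignment_duality (R : realFieldType) (I : finType) (C : I -> I -> R) :
  exists (s : {perm I}) (a b : I -> R),
    (forall i j, C i j <= a i + b j) /\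
    \sum_i (a i + b i) = \sum_i C i (s i).
Proof.
pose F (s : {perm I}) := \sum_i C i (s i).
case: (@arg_maxP _ _ _ 1%g predT F isT) => s _ s_max.
pose d i k := C i (s i) - C i (s k).
have d_diag i : d i i = 0 by rewrite /d subrr.
have perm_cost_ge0 (t : {perm I}) : 0 <= \sum_i d i (t i).
  rewrite sumrB subr_ge0 -/(F s).
  have -> : \sum_i C i (s (t i)) = F (t * s)%g.
    by apply: eq_bigr => i _; rewrite permM.
  exact: s_max.
have tri := potential_triangle d_diag perm_cost_ge0.
exists s, (fun i => C i (s i) - potential d i).
exists (fun j => potential d ((s^-1)%g j)).
split=> [i j|].
  by have := tri i ((s^-1)%g j); rewrite /d permKV; lra.
rewrite big_split sumrB /= [X in _ + X](reindex_inj (@perm_inj _ s)) /=.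
by under [X in _ + X]eq_bigr => i _ do rewrite permK; rewrite subrK.
Qed.

Section Matchings.
Variables (R : realFieldType) (X : finType) (n : X -> nat).
Implicit Types (mu nu : X -> X -> nat) (Phi A : X -> X -> R) (u : X -> R).

Lemma roommate_feasibleP mu :
  reflect ((forall x y, mu x y = mu y x) /\
           (forall x, 2 * mu x x + \sum_(y | y != x) mu x y <= n x)%N)
          (roommate_feasible n mu).
Proof.
apply: (iffP andP) => [[/forallP sym /forallP row]|[sym row]].
  by split=> // x y; apply/eqP; move/forallP: (sym x).
by split; apply/forallP => x //; apply/forallP => y; rewrite sym.
Qed.

Lemma bipartite_feasibleP nu :
  reflect ((forall x, \sum_y nu x y <= n x)%N /\
           (forall y, \sum_x nu x y <= n y)%N)
          (bipartite_feasible n nu).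
Proof.
by apply: (iffP andP) => [[/forallP row /forallP col]|[row col]];
  split=> //; apply/forallP.
Qed.

Lemma le_nbound x : (n x <= nbound n)%N.
Proof. by rewrite /nbound (bigD1 x) //= leq_addr. Qed.

Lemma roommate_feasible_bounded mu :
  roommate_feasible n mu -> forall x y, (mu x y <= nbound n)%N.
Proof.
case/roommate_feasibleP=> _ row x y; apply: leq_trans (le_nbound x).
have := row x; have [->|yx] := eqVneq y x; first by lia.
by rewrite (bigD1 y) //=; lia.
Qed.

Lemma bipartite_feasible_bounded nu :
  bipartite_feasible n nu -> forall x y, (nu x y <= nbound n)%N.
Proof.
case/bipartite_feasibleP=> row _ x y; apply: leq_trans (le_nbound x).
by apply: leq_trans (row x); rewrite (bigD1 y) //= leq_addr.
Qed.

Lemma le_W_P Phi mu : roommate_feasible n mu -> S_R Phi mu <= W_P n Phi.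
Proof. by move=> feas; exact: le_encoded_max (roommate_feasible_bounded feas) _. Qed.

Lemma le_W_B Phi nu : bipartite_feasible n nu -> S_B Phi nu <= W_B n Phi.
Proof. by move=> feas; exact: le_encoded_max (bipartite_feasible_bounded feas) _. Qed.

Lemma W_B_le Phi b :
    0 <= b -> (forall nu, bipartite_feasible n nu -> S_B Phi nu <= b) ->
  W_B n Phi <= b.
Proof. exact: encoded_max_le. Qed.

Lemma W_P_attained Phi :
  exists2 mu, roommate_feasible n mu & W_P n Phi = S_R Phi mu.
Proof.
have feas0 : roommate_feasible n (fun _ _ => 0%N).
  by apply/roommate_feasibleP; split=> // x; rewrite big1.
apply: encoded_max_attained feas0 _ => //.
rewrite /S_R !big1 ?addr0 // => x _; rewrite ?mul0r //.
by rewrite big1 // => y _; rewrite !mul0r.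
Qed.

Lemma S_B_add Phi A nu :
  S_B (fun x y => Phi x y + A x y) nu = S_B Phi nu + S_B A nu.
Proof.
rewrite /S_B -big_split; apply: eq_bigr => x _; rewrite -big_split.
by apply: eq_bigr => y _; rewrite mulrDl mulrDr.
Qed.

Lemma S_B_antisym A nu :
    (forall x y, A x y = - A y x) -> (forall x y, nu x y = nu y x) ->
  S_B A nu = 0.
Proof.
move=> A_anti nu_sym; set z := S_B A nu.
suff : z = - z by lra.
rewrite {1}/z /S_B exchange_big /= -sumrN; apply: eq_bigr => x _.
by rewrite -sumrN; apply: eq_bigr => y _; rewrite A_anti nu_sym mulNr mulrN.
Qed.

Lemma bipartite_weak_duality Phi nu u :
    bipartite_feasible n nu -> (forall x, 0 <= u x) ->
    (forall x y, Phi x y <= u x + u y) ->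
  S_B Phi nu <= \sum_x u x * (n x)%:R.
Proof.
case/bipartite_feasibleP=> row col u_ge0 Phi_le.
have rows : \sum_x \sum_y (nu x y)%:R * u x <= \sum_x u x * (n x)%:R.
  apply: ler_sum => x _; rewrite -mulr_suml -natr_sum mulrC.
  by apply: ler_wpM2l => //; rewrite ler_nat.
have cols : \sum_x \sum_y (nu x y)%:R * u y <= \sum_x u x * (n x)%:R.
  rewrite exchange_big; apply: ler_sum => y _; rewrite -mulr_suml -natr_sum mulrC.
  by apply: ler_wpM2l => //; rewrite ler_nat.
suff : S_B Phi nu <= (\sum_x \sum_y (nu x y)%:R * u x +
                      \sum_x \sum_y (nu x y)%:R * u y) / 2 by lra.
rewrite -big_split mulr_suml; apply: ler_sum => x _ /=.
rewrite -big_split mulr_suml; apply: ler_sum => y _ /=.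
rewrite -mulrDr -mulrA; apply: ler_wpM2l => //.
by apply: ler_wpM2r (Phi_le x y); rewrite invr_ge0 ler0n.
Qed.

Definition double_diag mu x y : nat := if x == y then (2 * mu x x)%N else mu x y.

Lemma S_B_double_diag Phi mu : S_B Phi (double_diag mu) = S_R Phi mu.
Proof.
rewrite /S_R /S_B -big_split; apply: eq_bigr => x _ /=.
rewrite (bigD1 x) //= {1}/double_diag eqxx; congr (_ + _).
  by rewrite natrM; field.
by apply: eq_bigr => y yx; rewrite /double_diag eq_sym (negbTE yx) mulrA.
Qed.

Lemma double_diag_sym mu :
  (forall x y, mu x y = mu y x) ->
  forall x y, double_diag mu x y = double_diag mu y x.
Proof. by move=> mu_sym x y; rewrite /double_diag eq_sym; case: eqP => [->|]. Qed.

Lemma double_diag_feasible mu :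
  roommate_feasible n mu -> bipartite_feasible n (double_diag mu).
Proof.
case/roommate_feasibleP=> mu_sym row.
have row_sum x :
    (\sum_y double_diag mu x y = 2 * mu x x + \sum_(y | y != x) mu x y)%N.
  rewrite (bigD1 x) //= /double_diag eqxx; congr (_ + _)%N.
  by apply: eq_bigr => y yx; rewrite eq_sym (negbTE yx).
apply/bipartite_feasibleP; split=> x; first by rewrite row_sum.
by under eq_bigr do rewrite double_diag_sym //; rewrite row_sum.
Qed.

Lemma roommate_weak_duality Phi mu u A :
  roommate_feasible n mu -> dual_feasible Phi u A ->
  S_R Phi mu <= \sum_x u x * (n x)%:R.
Proof.
move=> feas [u_ge0 [Phi_le A_anti]]; have [mu_sym _] := roommate_feasibleP _ feas.
have -> : S_R Phi mu = S_B (fun x y => Phi x y + A x y) (double_diag mu).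
  rewrite S_B_add (S_B_antisym A_anti (double_diag_sym mu_sym)) addr0.
  exact/esym/S_B_double_diag.
exact: (bipartite_weak_duality (Phi := fun x y => Phi x y + A x y))
  (double_diag_feasible feas) u_ge0 Phi_le.
Qed.

Lemma W_P_le_W_B Phi : W_P n Phi <= W_B n Phi.
Proof.
apply: encoded_max_le => [|mu feas]; first exact: bigmax_ge_id.
by rewrite -S_B_double_diag le_W_B // double_diag_feasible.
Qed.

Lemma dual_feasible0 Phi u :
  (forall x, 0 <= u x) -> (forall x y, Phi x y <= u x + u y) ->
  dual_feasible Phi u (fun _ _ => 0).
Proof. by move=> u_ge0 Phi_le; split=> //; split=> x y; rewrite ?addr0 ?oppr0. Qed.

Lemma stable_outcome_optimal Phi mu u : stable_outcome n Phi mu u ->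
  S_R Phi mu = W_P n Phi /\ W_P n Phi = W_B n Phi.
Proof.
case=> [[feas value] [u_ge0 Phi_le]].
have W_B_le_value : W_B n Phi <= S_R Phi mu.
  rewrite -value; under eq_bigr do rewrite mulrC.
  apply: W_B_le => [|nu feas_nu]; last exact: bipartite_weak_duality.
  by apply: sumr_ge0 => x _; rewrite mulr_ge0.
have := le_W_P Phi feas; have := W_P_le_W_B Phi; lra.
Qed.

End Matchings.

Section Individuals.
Variables (R : realFieldType) (X : finType) (n : X -> nat) (Phi : X -> X -> R).

Definition individual := {x : X & 'I_(n x)}.

Lemma count_individuals x : (\sum_(i : individual | tag i == x) 1 = n x)%N.
Proof.
have := sig_big_dep (op := addn) (J := fun x => 'I_(n x)) (pred1 x)
  (fun _ _ => true) (fun _ _ => 1%N).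
rewrite big_pred1_eq sum1_card card_ord => ->.
by apply: eq_bigl => i; rewrite andbT.
Qed.

Definition perm_matching (s : {perm individual}) (x y : X) : nat :=
  \sum_(i | (tag i == x) && (tag (s i) == y)) ((0 < Phi x y)%R : nat).

Lemma perm_matching_feasible s : bipartite_feasible n (perm_matching s).
Proof.
apply/bipartite_feasibleP; split=> [x|y].
  rewrite -count_individuals (partition_big (fun i => tag (s i)) predT) //=.
  by apply: leq_sum => y _; apply: leq_sum => i _; rewrite leq_b1.
rewrite -count_individuals (reindex_inj (@perm_inj _ s)) /=.
rewrite (partition_big (fun i => tag i) predT) //=.
apply: leq_sum => x _; rewrite /perm_matching (eq_bigl _ _ (fun i => andbC _ _)).
by apply: leq_sum => i _; rewrite leq_b1.
Qed.

Definition half_pos_surplus (i j : individual) : R :=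
  Num.max (Phi (tag i) (tag j)) 0 / 2.

Lemma S_B_perm_matching s :
  S_B Phi (perm_matching s) = \sum_i half_pos_surplus i (s i).
Proof.
rewrite (partition_big (fun i => tag i) predT) //=; apply: eq_bigr => x _.
rewrite (partition_big (fun i => tag (s i)) predT) //=; apply: eq_bigr => y _.
rewrite natr_sum mulr_suml; apply: eq_bigr => i /andP[/eqP<- /eqP<-].
by rewrite /half_pos_surplus; case: ltP; rewrite ?mul1r ?mul0r.
Qed.

Hypothesis Phi_sym : forall x y, Phi x y = Phi y x.

Lemma exists_dual_le_W_B : exists u : X -> R,
  [/\ forall x, 0 <= u x, forall x y, Phi x y <= u x + u y
    & \sum_x u x * (n x)%:R <= W_B n Phi].
Proof.
have [s [a [b [Cab sum_ab]]]] := assignment_duality half_pos_surplus.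
pose e i := a i + b i.
have e_ge0 i : 0 <= e i.
  by apply: le_trans (Cab i i); rewrite divr_ge0 ?le_max ?lexx ?orbT.
have e_pair i j : Phi (tag i) (tag j) <= e i + e j.
  have := Cab i j; have := Cab j i; rewrite /half_pos_surplus Phi_sym /e.
  have : Phi (tag i) (tag j) <= Num.max (Phi (tag i) (tag j)) 0.
    by rewrite le_max lexx.
  lra.
pose M := \big[Num.max/0]_(p : X * X) Phi p.1 p.2.
have M_ge0 : 0 <= M := bigmax_ge_id _ _ _ _.
have Phi_le_M x y : Phi x y <= M.
  exact: (le_bigmax 0 (fun p : X * X => Phi p.1 p.2) (x, y)).
pose u x := \big[Num.min/M]_(i | tag i == x) e i.
have u_ge0 x : 0 <= u x by apply: le_bigmin => // i _.
exists u; split=> // [x y|].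
  rewrite -lerBlDr; apply: le_bigmin => [|i /eqP <-].
    by have := u_ge0 y; have := Phi_le_M x y; lra.
  rewrite lerBlDr addrC -lerBlDr; apply: le_bigmin => [|j /eqP <-].
    by have := e_ge0 i; have := Phi_le_M (tag i) y; lra.
  by rewrite lerBlDr addrC.
apply: le_trans (le_W_B Phi (perm_matching_feasible s)).
rewrite S_B_perm_matching -sum_ab -/(\sum_i e i).
rewrite (partition_big (fun i => tag i) predT) //=; apply: ler_sum => x _.
rewrite -count_individuals natr_sum mulr_sumr.
by apply: ler_sum => i tag_i; rewrite mulr1; apply: bigmin_le_cond.
Qed.

End Individuals.

Theorem theorem2 (R : realFieldType) (X : finType) (hX : (0 < #|X|)%N)
  (n : X -> nat) (Phi : X -> X -> R)
  (hPhi : forall x y, Phi x y = Phi y x) :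
  ((exists mu, stable_roommate_matching n Phi mu) <-> W_P n Phi = W_B n Phi)
  /\ (forall mu, stable_roommate_matching n Phi mu -> S_R Phi mu = W_P n Phi)
  /\ (forall mu u, stable_outcome n Phi mu u ->
        exists A, dual_optimal n Phi u A).
Proof.
have value_mulrC (u : X -> R) : \sum_x (n x)%:R * u x = \sum_x u x * (n x)%:R.
  by apply: eq_bigr => x _; rewrite mulrC.
split; [split|split].
- by case=> mu [_ [u /stable_outcome_optimal[]]].
- move=> W_eq; have [u [u_ge0 Phi_le u_value]] := exists_dual_le_W_B n hPhi.
  have [mu feas mu_opt] := W_P_attained n Phi.
  have := roommate_weak_duality feas (dual_feasible0 u_ge0 Phi_le).
  exists mu; split=> //; exists u; do 2!split=> //; rewrite value_mulrC; lra.
- by move=> mu [_ [u /stable_outcome_optimal[]]].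
- move=> mu u [[feas value] [u_ge0 Phi_le]].
  exists (fun _ _ => 0); split; first exact: dual_feasible0.
  by move=> u' A' /(roommate_weak_duality feas); rewrite -(value_mulrC u) value.
Qed.
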